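(* Let $L$ be a limit group over free products with set of elliptics $E_L$. (i) Let $u_1,u_2,u_3$ be nontrivial elements of $L$ such that at least one of them is not in $E_L$, and $[u_1,u_2]=1$, $[u_1,u_3]=1$. Then none of $u_1,u_2,u_3$ lies in $E_L$ and $[u_2,u_3]=1$. (ii) Let $A<L$ be a nontrivial abelian subgroup not contained in $E_L$. Then $A$ is contained in a unique maximal abelian subgroup of $L$, namely its centralizer $C(A)$, and $C(A)\cap E_L=\{1\}$. (iii) With $A$ as in (ii), $C(A)$ has index at most 2 in the normalizer $N(A)$; for every $\ell\in L\setminus N(A)$, $\ell C(A)\ell^{-1}\cap A=\{1\}$ (so $C(A)$ is almost malnormal); and if $[N(A):C(A)]=2$ then $N(A)$ is generated by $C(A)$ and an element of order 2 lying in $E_L$ that conjugates every element of $C(A)$ to its inverse.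
   Context: An element of a free product $A*B$ is elliptic if it lies in a conjugate of $A$ or of $B$. For a finitely generated group $G$ and groups $A_n,B_n$, a sequence of homomorphisms $h_n:G\to A_n*B_n$ is convergent if for every $g\in G$: either $h_n(g)=1$ for all large $n$ or $h_n(g)\ne1$ for all large $n$; and either $h_n(g)$ is elliptic for all large $n$ or non-elliptic for all large $n$. Its stable kernel is $K=\{g: h_n(g)=1\text{ for all large }n\}$; $L=G/K$ (with quotient $\eta$) is called a limit group over free products, and its set of elliptics is $E_L=\{\eta(g): h_n(g)\text{ elliptic for all large }n\}$. *)

From mathcomp Require Import all_boot.
Set Implicit Arguments.
Unset Strict Implicit.
Unset Printing Implicit Defensive.
Local Open Scope group_scope.

Definition group_hom (G H : groupType) (f : G -> H) : Prop :=
  forall x y : G, f (x * y) = f x * f y.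

Inductive generated (G : groupType) (S : G -> Prop) : G -> Prop :=
  | gen_base x : S x -> generated S x
  | gen_one : generated S 1
  | gen_mul x y : generated S x -> generated S y -> generated S (x * y)
  | gen_inv x : generated S x -> generated S x^-1.

Definition finitely_generated (G : groupType) : Prop :=
  exists s : seq G, forall g : G, generated (fun x => x \in s) g.

Definition is_subgroup (G : groupType) (H : G -> Prop) : Prop :=
  H 1 /\ (forall x y, H x -> H y -> H (x * y)) /\ (forall x, H x -> H x^-1).

Definition abelian_pred (G : groupType) (H : G -> Prop) : Prop :=
  forall x y, H x -> H y -> x * y = y * x.

Definition subset_pred (G : groupType) (H K : G -> Prop) : Prop :=
  forall x, H x -> K x.

Definition max_abelian (G : groupType) (M : G -> Prop) : Prop :=
  is_subgroup M /\ abelian_pred M /\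
  (forall M' : G -> Prop, is_subgroup M' -> abelian_pred M' ->
     subset_pred M M' -> subset_pred M' M).

Definition centralizer (G : groupType) (A : G -> Prop) : G -> Prop :=
  fun x => forall a, A a -> x * a = a * x.

Definition normalizer (G : groupType) (A : G -> Prop) : G -> Prop :=
  fun x => forall a, A a <-> A (x * a * x^-1).

(* [N : C] <= 2, for C a subgroup of N: among any three elements of N,
   two lie in the same left coset of C. *)
Definition index_le2 (G : groupType) (C N : G -> Prop) : Prop :=
  forall x y z, N x -> N y -> N z ->
    C (x^-1 * y) \/ C (x^-1 * z) \/ C (y^-1 * z).

Section FreeProduct.
Variables (A B P : groupType) (iA : A -> P) (iB : B -> P).

Definition letter_ok (c : A + B) : bool :=
  match c with inl a => a != 1 | inr b => b != 1 end.

Definition same_factor (c d : A + B) : bool :=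
  match c, d with
  | inl _, inl _ => true
  | inr _, inr _ => true
  | _, _ => false
  end.

Definition reduced_word (w : seq (A + B)) : bool :=
  all letter_ok w && sorted (fun c d => ~~ same_factor c d) w.

Definition eval_word (w : seq (A + B)) : P :=
  foldr (fun c acc => (match c with inl a => iA a | inr b => iB b end) * acc)
        1 w.

(* P is the free product A * B with factor maps iA, iB: iA, iB are
   homomorphisms and every element of P is the value of a unique reduced word *)
Definition is_free_product : Prop :=
  group_hom iA /\ group_hom iB /\
  (forall p : P, exists! w : seq (A + B), reduced_word w /\ eval_word w = p).

Definition elliptic (p : P) : Prop :=
  exists g : P, (exists a : A, p = g * iA a * g^-1) \/
                (exists b : B, p = g * iB b * g^-1).

End FreeProduct.

Definition eventually (Q : nat -> Prop) : Prop :=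
  exists N, forall n, (N <= n)%N -> Q n.

Section Limit.
Variables (G : groupType) (FA FB P : nat -> groupType)
  (iA : forall n, FA n -> P n) (iB : forall n, FB n -> P n)
  (h : forall n, G -> P n).

Definition convergent : Prop :=
  forall g : G,
    (eventually (fun n => h n g = 1) \/ eventually (fun n => h n g <> 1)) /\
    (eventually (fun n => elliptic (@iA n) (@iB n) (@h n g)) \/
     eventually (fun n => ~ elliptic (@iA n) (@iB n) (@h n g))).

Definition stable_kernel (g : G) : Prop := eventually (fun n => h n g = 1).

Definition elliptics (L : groupType) (eta : G -> L) (x : L) : Prop :=
  exists g : G, eta g = x /\
    eventually (fun n => elliptic (@iA n) (@iB n) (@h n g)).

End Limit.

From mathcomp Require Import all_boot.
From Stdlib Require Import Classical.
Set Implicit Arguments.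
Unset Strict Implicit.
Unset Printing Implicit Defensive.
Local Open Scope group_scope.

(* The theorem is reduced to six first-order "commutation axioms" about a
   group L with a distinguished set E of elliptic elements (record
   [commutation_axioms]): E contains 1; the centralizer of a non-elliptic
   element u consists of non-elliptic elements (besides 1) and is abelian;
   a conjugate of u commuting with u equals u or u^-1; and an element
   inverting u is an elliptic involution inverting the whole centralizer.

   1. In a free product A * B, with E the elliptic elements, the axioms hold.
      The proof works with reduced words: every non-elliptic element is a
      conjugate of a cyclically reduced word x; a nontrivial element
      commuting with x has, up to inversion, a cyclically reduced word with
      the same first and last factors as x, and the two words commute in the
      free monoid; lengths of powers then rule out all other configurations.
   2. Each axiom is a universal statement about finitely many elements whose
      hypotheses and conclusions are equations and (non-)ellipticity, so it
      passes from the free products A_n * B_n to the limit group L = G/K.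
   3. Parts (i)-(iii) follow from the axioms alone, by elementary group
      theory on the centralizer C(A) and the normalizer N(A). *)

Section Conjugation.
Variable G : groupType.
Implicit Types x y g : G.

Definition cj g x := g * x * g^-1.

Lemma cjM g x y : cj g (x * y) = cj g x * cj g y.
Proof. by rewrite /cj !mulgA mulgVK. Qed.

Lemma cjV g x : cj g x^-1 = (cj g x)^-1.
Proof. by rewrite /cj !invgM invgK mulgA. Qed.

Lemma cj1 g : cj g 1 = 1.
Proof. by rewrite /cj mulg1 mulgV. Qed.

Lemma cj1g x : cj 1 x = x.
Proof. by rewrite /cj mul1g invg1 mulg1. Qed.

Lemma cjK g x : cj g^-1 (cj g x) = x.
Proof. by rewrite /cj invgK !mulgA mulVg mul1g mulgVK. Qed.

Lemma cjKV g x : cj g (cj g^-1 x) = x.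
Proof. by rewrite -{1}(invgK g) cjK. Qed.

Lemma cjJ g k x : cj g (cj k x) = cj (g * k) x.
Proof. by rewrite /cj invgM !mulgA. Qed.

Lemma cj_inj g x y : cj g x = cj g y -> x = y.
Proof. by move=> E; rewrite -(cjK g x) E cjK. Qed.

Lemma cjX g x k : cj g (x ^+ k) = (cj g x) ^+ k.
Proof.
by elim: k => [|k IH]; [rewrite !expg0 cj1 | rewrite !expgS cjM IH].
Qed.

Lemma cj_commute g x : commute g x -> cj g x = x.
Proof. by rewrite /cj => ->; rewrite mulgK. Qed.

Lemma commute_cj g x y : commute x y -> commute (cj g x) (cj g y).
Proof. by rewrite /commute -!cjM => ->. Qed.

Lemma commute_cjV g x y : commute (cj g x) (cj g y) -> commute x y.
Proof. by move=> /(commute_cj g^-1); rewrite !cjK. Qed.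

Lemma commuteVl x y : commute x y -> commute x^-1 y.
Proof. by move=> C; apply/commute_sym/commuteV/commute_sym. Qed.

Lemma commute_pm x y x' y' : (x' = x \/ x' = x^-1) -> (y' = y \/ y' = y^-1) ->
  commute x' y' -> commute x y.
Proof.
move=> [->|->] [->|->] // C.
- by rewrite -(invgK y); apply: commuteV.
- by rewrite -(invgK x); apply: commuteVl.
- by rewrite -(invgK x) -(invgK y); apply/commuteVl/commuteV.
Qed.

End Conjugation.

Section Homomorphisms.
Variables (X Y : groupType) (f : X -> Y).
Hypothesis fM : group_hom f.

Lemma hom1 : f 1 = 1.
Proof. by apply/esym/(mulgI (f 1)); rewrite -fM !mulg1. Qed.

Lemma homV x : f x^-1 = (f x)^-1.
Proof. by apply/esym/mulg1_eq; rewrite -fM mulgV hom1. Qed.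

Lemma homX x k : f (x ^+ k) = (f x) ^+ k.
Proof. by elim: k => [|k IH]; [rewrite !expg0 hom1 | rewrite !expgS fM IH]. Qed.

End Homomorphisms.

Record commutation_axioms (L : groupType) (E : L -> Prop) : Prop := {
  elliptic1 : E 1;
  centralizer_nonelliptic_ax : forall u v : L,
    ~ E u -> v <> 1 -> commute u v -> ~ E v;
  commute_trans_ax : forall u v w : L,
    ~ E u -> commute u v -> commute u w -> commute v w;
  conj_commuting_ax : forall x u : L,
    ~ E u -> commute (x * u * x^-1) u -> x * u * x^-1 = u \/ x * u * x^-1 = u^-1;
  inverter_centralizer_ax : forall x u v : L,
    ~ E u -> x * u * x^-1 = u^-1 -> commute u v -> x * v * x^-1 = v^-1;
  inverter_involution_ax : forall x u : L,
    ~ E u -> x * u * x^-1 = u^-1 -> x * x = 1 /\ E x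
}.

Section FreeProduct.
Variables (A B P : groupType) (iA : A -> P) (iB : B -> P).
Hypothesis Hfree : is_free_product iA iB.

Notation word := (seq (A + B)).
Notation ev := (eval_word iA iB).
Notation red := (@reduced_word A B).

Lemma homA : group_hom iA. Proof. by case: Hfree. Qed.
Lemma homB : group_hom iB. Proof. by case: Hfree => _ []. Qed.

Definition lval (c : A + B) : P := match c with inl a => iA a | inr b => iB b end.

Lemma ev_cons c w : ev (c :: w) = lval c * ev w.
Proof. by []. Qed.

Lemma ev_cat u v : ev (u ++ v) = ev u * ev v.
Proof. by elim: u => [|c u IH] /=; [rewrite mul1g | rewrite IH mulgA]. Qed.

(* The factor (true for A) of a letter, of the first and of the last letter
   of a word; two reduced words can be concatenated into a reduced word iff
   one is empty or the last factor of the first differs from the first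
   factor of the second ([joinable]). *)
Definition isA (c : A + B) : bool := if c is inl _ then true else false.
Definition hA (w : word) : bool := if w is c :: _ then isA c else false.
Definition lA (w : word) : bool := if w is c :: w' then isA (last c w') else false.
Definition joinable (u v : word) : bool :=
  (u == [::]) || (v == [::]) || (lA u != hA v).

Lemma same_factorE c d : same_factor c d = (isA c == isA d).
Proof. by case: c; case: d. Qed.

Lemma red_cons c w :
  red (c :: w) = [&& letter_ok c, red w & (w == [::]) || (isA c != hA w)].
Proof.
rewrite /reduced_word /=; case: w => [|d w] /=; first by rewrite !andbT.
rewrite same_factorE.
by case: (letter_ok c); case: (letter_ok d); case: (all _ w); case: (path _ d w);
   case: (isA c == isA d).
Qed.

Lemma red_cat u v : red (u ++ v) = [&& red u, red v & joinable u v].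
Proof.
elim: u => [|c u IH]; first by rewrite /= /joinable eqxx /= andbT.
rewrite cat_cons red_cons IH red_cons.
case: u IH => [|d u] IH /=.
  by case: v {IH} => [|e v] //=; rewrite /joinable /= ?andbT.
rewrite /joinable /=.
by case: (letter_ok c); case: (red (d :: u)); case: (red v); case: (isA c != isA d);
   rewrite ?andbT ?andbF.
Qed.

Lemma nf_ex (p : P) : exists w : word, red w && (ev w == p).
Proof. by case: Hfree => _ [_ /(_ p) [w [[Hr He] _]]]; exists w; rewrite Hr He eqxx. Qed.

Definition nf (p : P) : word := xchoose (nf_ex p).

Lemma nf_red p : red (nf p).
Proof. by case/andP: (xchooseP (nf_ex p)). Qed.

Lemma nf_ev p : ev (nf p) = p.
Proof. by case/andP: (xchooseP (nf_ex p)) => _ /eqP. Qed.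

Lemma nfE u : red u -> nf (ev u) = u.
Proof.
move=> Hu; case: Hfree => _ [_ /(_ (ev u)) [w [_ U]]].
by rewrite -(U _ (conj (nf_red (ev u)) (nf_ev (ev u)))) (U u (conj Hu erefl)).
Qed.

Lemma nf_inj p q : nf p = nf q -> p = q.
Proof. by move=> E; rewrite -(nf_ev p) E nf_ev. Qed.

Lemma nf1 : nf 1 = [::].
Proof. by rewrite -[1]/(ev [::]) nfE. Qed.

Lemma nf_eq1 p : (nf p == [::]) = (p == 1).
Proof. by apply/eqP/eqP => [E|->]; [rewrite -(nf_ev p) E | exact: nf1]. Qed.

Lemma nf_mul p q : joinable (nf p) (nf q) -> nf (p * q) = nf p ++ nf q.
Proof.
move=> J; rewrite -{1}(nf_ev p) -{1}(nf_ev q) -ev_cat nfE //.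
by rewrite red_cat !nf_red J.
Qed.

Definition len p := size (nf p).

Lemma len_ev u : red u -> len (ev u) = size u.
Proof. by move=> Hu; rewrite /len nfE. Qed.

Definition cinv (c : A + B) : A + B :=
  match c with inl a => inl a^-1 | inr b => inr b^-1 end.
Definition winv (w : word) : word := rev (map cinv w).

Lemma lval_cinv c : lval (cinv c) = (lval c)^-1.
Proof. by case: c => x /=; [exact: (homV homA x) | exact: (homV homB x)]. Qed.

Lemma isA_cinv c : isA (cinv c) = isA c. Proof. by case: c. Qed.

Lemma ok_cinv c : letter_ok (cinv c) = letter_ok c.
Proof. by case: c => x /=; rewrite invg_eq1. Qed.

Lemma winv_cons c w : winv (c :: w) = winv w ++ [:: cinv c].
Proof. by rewrite /winv /= rev_cons cats1. Qed.

Lemma size_winv w : size (winv w) = size w.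
Proof. by rewrite /winv size_rev size_map. Qed.

Lemma ev_winv w : ev (winv w) = (ev w)^-1.
Proof.
elim: w => [|c w IH]; first by rewrite /= invg1.
by rewrite winv_cons ev_cat IH ev_cons mulg1 lval_cinv ev_cons invgM.
Qed.

Lemma hA_winv w : hA (winv w) = lA w.
Proof.
elim/last_ind: w => [|w c _] //.
rewrite /winv map_rcons rev_rcons /= isA_cinv.
by case: w => //= d w; rewrite last_rcons.
Qed.

Lemma lA_winv w : lA (winv w) = hA w.
Proof.
case: w => [|c w] //; rewrite winv_cons.
by case E: (winv w) => [|d u] /=; rewrite ?last_cat /= isA_cinv.
Qed.

Lemma red_winv w : red (winv w) = red w.
Proof.
elim: w => [|c w IH] //.
rewrite winv_cons red_cat IH (red_cons c w) red_cons ok_cinv /=.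
case: w {IH} => [|d w] /=; first by rewrite /joinable /= !andbT.
rewrite /joinable /= orbF -/(winv (d :: w)) lA_winv isA_cinv /=.
case E: (winv (d :: w)) => [|e u]; first by move: (size_winv (d :: w)); rewrite E.
by case: (letter_ok c); case: (red _); case: (isA c); case: (isA d).
Qed.

Lemma nf_inv p : nf p^-1 = winv (nf p).
Proof. by rewrite -{1}(nf_ev p) -ev_winv nfE // red_winv nf_red. Qed.

Lemma len_inv p : len p^-1 = len p.
Proof. by rewrite /len nf_inv size_winv. Qed.

Lemma cons_as_rcons (T : Type) (x : T) s : exists u c, x :: s = rcons u c.
Proof. by exists (belast x s), (last x s); exact: lastI. Qed.

Lemma lval_trivial c : letter_ok c = false -> lval c = 1.
Proof. by case: c => x /= /negbFE /eqP ->; [exact: hom1 homA | exact: hom1 homB]. Qed.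

Lemma lval_merge c d : isA c = isA d ->
  exists e, lval c * lval d = lval e /\ isA e = isA c.
Proof.
case: c => x; case: d => y //= _.
- by exists (inl (x * y)); rewrite /= homA.
- by exists (inr (x * y)); rewrite /= homB.
Qed.

Lemma len_lval c : len (lval c) <= 1.
Proof.
case E: (letter_ok c); last by rewrite lval_trivial // /len nf1.
by rewrite -(mulg1 (lval c)) -[lval c * 1]/(ev [:: c]) len_ev // red_cons E.
Qed.

Lemma len_lvalM c r : len (lval c * r) <= (len r).+1.
Proof.
case E: (letter_ok c); last by rewrite lval_trivial // mul1g.
case En: (nf r) => [|d w].
  by rewrite -(nf_ev r) En mulg1; exact: leq_trans (len_lval c) _.
have := nf_red r; rewrite En red_cons => /and3P [_ Hw Hj].
rewrite /len En /= -/(len _).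
case Ecd: (isA c == isA d); last first.
  have Hr : red (c :: d :: w) by rewrite red_cons E /= Ecd /= andbT -En nf_red.
  by rewrite -(nf_ev r) En -ev_cons len_ev.
have [e [Ee He]] := lval_merge (eqP Ecd).
rewrite -(nf_ev r) En ev_cons mulgA Ee.
case Eo: (letter_ok e); last by rewrite lval_trivial // mul1g len_ev // leqW.
have Hr : red (e :: w).
  rewrite red_cons Eo Hw /=.
  by case: w Hj {Hw En} => //= f w; rewrite He (eqP Ecd).
by rewrite -ev_cons len_ev.
Qed.

Lemma len_evM u q : len (ev u * q) <= size u + len q.
Proof.
elim: u q => [|c u IH] q /=; first by rewrite mul1g.
by rewrite -mulgA; apply: leq_trans (len_lvalM _ _) _; rewrite ltnS IH.
Qed.

Lemma len_ev_le u : len (ev u) <= size u.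
Proof. by have := len_evM u 1; rewrite mulg1 /len nf1 addn0. Qed.

Lemma len_mul p q : len (p * q) <= len p + len q.
Proof. by rewrite -{1}(nf_ev p) len_evM. Qed.

Lemma len_cj g u : len (cj g u) <= len g + len u + len g.
Proof.
rewrite /cj; apply: leq_trans (len_mul _ _) _; rewrite len_inv leq_add2r.
exact: len_mul.
Qed.

Lemma len_mul_joinable p q : joinable (nf p) (nf q) -> len (p * q) = len p + len q.
Proof. by move=> J; rewrite /len nf_mul // size_cat. Qed.

Lemma len_merge p q : nf p != [::] -> nf q != [::] -> lA (nf p) = hA (nf q) ->
  len (p * q) < len p + len q.
Proof.
move=> Hp Hq; case Eq: (nf q) Hq => [|d v] // _.
case Ep0: (nf p) Hp => [|c0 u0] // _.
have [u [c Ep]] := cons_as_rcons c0 u0; rewrite Ep in Ep0.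
have Hlc : lA (rcons u c) = isA c.
  by case: u {Ep Ep0} => //= f u; rewrite last_rcons.
rewrite Ep Hlc /= => Hcd.
have [e [Ee _]] := lval_merge Hcd.
have -> : p * q = ev u * (lval e * ev v).
  rewrite -(nf_ev p) -(nf_ev q) Ep0 Eq -cats1 ev_cat !ev_cons mulg1.
  by rewrite -!mulgA (mulgA (lval c)) Ee.
rewrite /len Ep0 Eq size_rcons /=.
apply: leq_ltn_trans (len_evM _ _) _.
rewrite addSn ltnS leq_add2l; apply: leq_trans (len_lvalM _ _) _.
by rewrite ltnS len_ev_le.
Qed.

Definition cycred (w : word) := (w != [::]) && (hA w != lA w).
Definition cyc p := cycred (nf p).

Lemma hA_cat u v : u != [::] -> hA (u ++ v) = hA u.
Proof. by case: u. Qed.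

Fixpoint wpow (w : word) k := if k is k'.+1 then w ++ wpow w k' else [::].

Lemma size_wpow w k : size (wpow w k) = (k * size w)%N.
Proof. by elim: k => //= k IH; rewrite size_cat IH mulSn. Qed.

Lemma nf_pow x k : cyc x -> nf (x ^+ k) = wpow (nf x) k.
Proof.
move=> /andP [Hne Hhl]; elim: k => [|k IH]; first by rewrite expg0 nf1.
rewrite expgS nf_mul IH //.
rewrite /joinable; case: k {IH} => [|k] /=; first by rewrite orbT.
by rewrite hA_cat // [lA _ == _]eq_sym Hhl !orbT.
Qed.

Lemma len_pow x k : cyc x -> len (x ^+ k) = (k * len x)%N.
Proof. by move=> H; rewrite /len nf_pow // size_wpow. Qed.

Lemma len_cyc_gt0 x : cyc x -> 0 < len x.
Proof. by rewrite lt0n size_eq0; case/andP. Qed.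

Lemma cyc_inv x : cyc x -> cyc x^-1.
Proof.
rewrite /cyc /cycred nf_inv hA_winv lA_winv -!size_eq0 size_winv.
by case/andP => -> /=; rewrite eq_sym.
Qed.

Lemma cyc_ne1 x : cyc x -> x != 1.
Proof. by case/andP; rewrite nf_eq1. Qed.

Notation ell := (elliptic iA iB).

Lemma ellP p : ell p <-> exists g c, p = cj g (lval c).
Proof.
split; first by case=> g [[a ->]|[b ->]]; [exists g, (inl a) | exists g, (inr b)].
by case=> g [[a|b] ->]; exists g; [left; exists a | right; exists b].
Qed.

Lemma ell_cj g p : ell p -> ell (cj g p).
Proof. by case/ellP => k [c ->]; apply/ellP; exists (g * k), c; rewrite cjJ. Qed.

Lemma ell_cjV g p : ell (cj g p) -> ell p.
Proof. by move/(ell_cj g^-1); rewrite cjK. Qed.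

Lemma ell_inv p : ell p -> ell p^-1.
Proof.
by case/ellP => k [c ->]; apply/ellP; exists k, (cinv c); rewrite lval_cinv cjV.
Qed.

Lemma ell_small p : len p <= 1 -> ell p.
Proof.
rewrite /len; case E: (nf p) => [|c [|d w]] //= _; apply/ellP.
  exists 1, (inl 1); rewrite cj1g /= (hom1 homA).
  by apply/eqP; rewrite -nf_eq1 E.
by exists 1, c; rewrite cj1g -(nf_ev p) E /= mulg1.
Qed.

Lemma ell1 : ell 1.
Proof. by apply: ell_small; rewrite /len nf1. Qed.

Lemma len_lvalX c k : len ((lval c) ^+ k) <= 1.
Proof.
case: c => x; first by rewrite -(homX homA) -[iA _]/(lval (inl _)) len_lval.
by rewrite -(homX homB) -[iB _]/(lval (inr _)) len_lval.
Qed.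

(* A cyclically reduced element is not elliptic: the powers of a conjugate
   g c g^-1 of a letter have length at most 2 len g + 1, whereas the powers
   of a cyclically reduced element grow without bound. *)
Lemma cyc_nell x : cyc x -> ~ ell x.
Proof.
move=> Hc /ellP [g [c Ex]]; set k := (len g).*2.+2.
have Hbound : len (x ^+ k) <= len g + 1 + len g.
  rewrite Ex -cjX; apply: leq_trans (len_cj _ _) _.
  by rewrite leq_add2r leq_add2l len_lvalX.
have Hk : k <= (k * len x)%N by rewrite leq_pmulr // len_cyc_gt0.
rewrite len_pow // in Hbound; move: (leq_trans Hk Hbound).
by rewrite /k -addnn addn1 addSn ltnn.
Qed.

(* Conversely, a non-elliptic element is a conjugate of a cyclically reduced
   one: conjugating by the first letter shortens a word that is not
   cyclically reduced. *)
Lemma nell_cyc p : ~ ell p -> exists g x, cyc x /\ p = cj g x.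
Proof.
move: {2}(len p) (leqnn (len p)) => n; elim: n p => [|n IH] p Hn Hp.
  by case: Hp; apply: ell_small; apply: leq_trans Hn _.
case Ecyc: (cyc p); first by exists 1, p; rewrite cj1g.
case E: (nf p) => [|c rest]; first by case: Hp; apply: ell_small; rewrite /len E.
case Er0: rest => [|c1 r1]; first by case: Hp; apply: ell_small; rewrite /len E Er0.
have [mid [d Er]] := cons_as_rcons c1 r1; rewrite -Er0 in Er.
move: Ecyc; rewrite /cyc /cycred E Er /= last_rcons => /negbT.
rewrite negbK => /eqP Hcd.
have [e [Ee _]] := lval_merge (esym Hcd).
set p' := cj (lval c)^-1 p.
have Hp' : p' = ev mid * lval e.
  rewrite /p' /cj invgK -(nf_ev p) E Er ev_cons -cats1 ev_cat ev_cons mulg1.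
  by rewrite !mulgA mulVg mul1g -mulgA Ee.
have Hlen : len p' <= n.
  rewrite Hp'; apply: leq_trans (len_evM _ _) _.
  move: Hn; rewrite /len E Er /= size_rcons => Hn.
  by apply: leq_trans (leq_add (leqnn _) (len_lval e)) _; rewrite addn1.
have Hnp' : ~ ell p' by move=> /(ell_cj (lval c)); rewrite /p' cjKV.
have [g [x [Hx Hg]]] := IH p' Hlen Hnp'.
by exists (lval c * g), x; split => //; rewrite -cjJ -Hg /p' cjKV.
Qed.

(* Fix a cyclically reduced x.  A
   nontrivial z commuting with x is, up to inversion, [aligned] with x: its
   normal form is nonempty with the same first and last factors as x (the
   other two configurations would make one of x * z, z * x reduced and the
   other shortened).  Aligned words concatenate freely with x on both sides,
   so z commutes with x as words of the free monoid. *)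
Definition aligned (x z : P) :=
  [&& nf z != [::], hA (nf z) == hA (nf x) & lA (nf z) == lA (nf x)].

Lemma bool_third (a b c : bool) : a != b -> (c == a) = false -> c = b.
Proof. by case: a; case: b; case: c. Qed.

Lemma commute_aligned x y : cyc x -> y != 1 -> commute x y ->
  aligned x y \/ aligned x y^-1.
Proof.
move=> /andP [Hxne Hx] Hy C.
have Hyne : nf y != [::] by rewrite nf_eq1.
case Eh: (hA (nf y) == hA (nf x)); case El: (lA (nf y) == lA (nf x)).
- by left; rewrite /aligned Hyne Eh El.
- have Hly : lA (nf y) = hA (nf x) by apply: bool_third El; rewrite eq_sym.
  have J : joinable (nf x) (nf y).
    by rewrite /joinable (eqP Eh) [lA _ == _]eq_sym Hx !orbT.
  by have := len_merge Hyne Hxne Hly; rewrite -C len_mul_joinable // addnC ltnn.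
- have Hhy : hA (nf y) = lA (nf x) by apply: bool_third Eh.
  have J : joinable (nf y) (nf x).
    by rewrite /joinable (eqP El) [lA _ == _]eq_sym Hx !orbT.
  by have := len_merge Hxne Hyne (esym Hhy); rewrite C len_mul_joinable // addnC ltnn.
- right.
  have Hhy : hA (nf y) = lA (nf x) by apply: bool_third Eh.
  have Hly : lA (nf y) = hA (nf x) by apply: bool_third El; rewrite eq_sym.
  rewrite /aligned nf_inv hA_winv lA_winv Hhy Hly !eqxx !andbT.
  by rewrite -size_eq0 size_winv size_eq0.
Qed.

Lemma commute_aligned_pm x z : cyc x -> commute x z -> z != 1 ->
  exists z', (z' = z \/ z' = z^-1) /\ aligned x z' /\ commute x z'.
Proof.
move=> Hc C Hz; case: (commute_aligned Hc Hz C) => Ha; first by exists z; split; [left|].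
by exists z^-1; split; [right | split => //; apply: commuteV].
Qed.

Lemma aligned_cyc x z : cyc x -> aligned x z -> cyc z.
Proof.
by case/andP => _ Hx /and3P [Hz /eqP Eh /eqP El]; rewrite /cyc /cycred Hz Eh El.
Qed.

Lemma aligned_commute_words x z : cyc x -> aligned x z -> commute x z ->
  nf z ++ nf x = nf x ++ nf z.
Proof.
move=> /andP [Hxne Hx] /and3P [Hz /eqP Eh /eqP El] C.
rewrite -nf_mul; last by rewrite /joinable El [lA _ == _]eq_sym Hx !orbT.
by rewrite -nf_mul ?C // /joinable Eh [lA _ == _]eq_sym Hx !orbT.
Qed.

(* In a free monoid, two words commuting with the same nonempty word w
   commute: both commute with a power of w longer than a ++ b. *)
Lemma wpow_commute (a w : word) k : a ++ w = w ++ a -> a ++ wpow w k = wpow w k ++ a.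
Proof.
move=> E; elim: k => [|k IH] /=; first by rewrite cats0.
by rewrite catA E -catA IH catA.
Qed.

Lemma words_commute_trans (a b w : word) : w != [::] ->
  a ++ w = w ++ a -> b ++ w = w ++ b -> a ++ b = b ++ a.
Proof.
move=> Hw Ea Eb; set k := size a + size b.
have Hk : k <= size (wpow w k) by rewrite size_wpow leq_pmulr // lt0n size_eq0.
have E1 : take k (a ++ b ++ wpow w k) = a ++ b by rewrite catA take_size_cat // size_cat.
have E2 : take k (b ++ a ++ wpow w k) = b ++ a.
  by rewrite catA take_size_cat // size_cat addnC.
have F1 : a ++ b ++ wpow w k = wpow w k ++ (a ++ b).
  by rewrite (wpow_commute k Eb) catA (wpow_commute k Ea) -catA.
have F2 : b ++ a ++ wpow w k = wpow w k ++ (b ++ a).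
  by rewrite (wpow_commute k Ea) catA (wpow_commute k Eb) -catA.
by rewrite -E1 -E2 F1 F2 !takel_cat.
Qed.

Lemma centralizer_nonelliptic p q : ~ ell p -> commute p q -> q != 1 -> ~ ell q.
Proof.
move=> Hp C Hq; have [g [x [Hx Ep]]] := nell_cyc Hp.
set q0 := cj g^-1 q; have Eq : q = cj g q0 by rewrite cjKV.
have C0 : commute x q0 by apply: (@commute_cjV _ g); rewrite -Eq -Ep.
have Hq0 : q0 != 1 by apply: contraNneq Hq => E; rewrite Eq -/q0 E cj1.
move=> He; have He0 : ell q0 by apply: (@ell_cjV g); rewrite -Eq.
have [z' [Ez [Ha _]]] := commute_aligned_pm Hx C0 Hq0.
by apply: (cyc_nell (aligned_cyc Hx Ha)); case: Ez => ->; last apply: ell_inv.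
Qed.

Lemma commute_trans_nonelliptic p q r : ~ ell p ->
  commute p q -> commute p r -> commute q r.
Proof.
move=> Hp Cq Cr; have [g [x [Hx Ep]]] := nell_cyc Hp.
set q0 := cj g^-1 q; have Eq : q = cj g q0 by rewrite cjKV.
set r0 := cj g^-1 r; have Er : r = cj g r0 by rewrite cjKV.
have Cq0 : commute x q0 by apply: (@commute_cjV _ g); rewrite -Eq -Ep.
have Cr0 : commute x r0 by apply: (@commute_cjV _ g); rewrite -Er -Ep.
rewrite Eq Er; apply: commute_cj.
have [->|Hq0] := eqVneq q0 1; first exact/commute_sym/commute1.
have [->|Hr0] := eqVneq r0 1; first exact: commute1.
have [q' [Eq' [Gq Cq']]] := commute_aligned_pm Hx Cq0 Hq0.
have [r' [Er' [Gr Cr']]] := commute_aligned_pm Hx Cr0 Hr0.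
apply: (commute_pm Eq' Er').
have W := words_commute_trans (proj1 (andP Hx))
  (aligned_commute_words Hx Gq Cq') (aligned_commute_words Hx Gr Cr').
by rewrite /commute -(nf_ev q') -(nf_ev r') -!ev_cat W.
Qed.

Lemma nonelliptic_square p : ~ ell p -> p * p != 1.
Proof.
move=> Hp; have [g [x [Hx ->]]] := nell_cyc Hp.
rewrite -cjM; apply/eqP => E.
have E1 : x * x = 1 by apply: (@cj_inj _ g); rewrite E cj1.
have := len_pow 2 Hx; rewrite expg2 E1 /len nf1.
by have := len_cyc_gt0 Hx; rewrite /len; case: (size (nf x)).
Qed.

(* An element s inverting a non-elliptic p squares to an element commuting
   with p; as p has no square root of 1 in its centralizer, s * s = 1, and
   an involution cannot be non-elliptic. *)
Lemma inverter_involution p s : ~ ell p -> s * p * s^-1 = p^-1 ->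
  s * s = 1 /\ ell s.
Proof.
move=> Hp H.
have E1 : s * p = p^-1 * s by rewrite -H mulgVK.
have E2 : s * p^-1 = p * s.
  have Hinv : cj s p^-1 = p by rewrite cjV /cj H invgK.
  by rewrite -{2}Hinv /cj mulgVK.
have C : commute p (s * s).
  by rewrite /commute; apply/esym; rewrite -mulgA E1 mulgA E2 -mulgA.
have Hss : s * s = 1.
  apply/eqP; apply: contraT => Hs.
  have Hn := centralizer_nonelliptic Hp C Hs.
  have Cs : commute (s * s) s by rewrite /commute mulgA.
  have Cps : commute s p.
    by apply: (commute_trans_nonelliptic Hn Cs); apply: commute_sym.
  have Ep : p^-1 = p by rewrite -H Cps mulgK.
  by move: (nonelliptic_square Hp); rewrite -{2}Ep mulgV eqxx.
split => //; apply: NNPP => Hs.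
by move: (nonelliptic_square Hs); rewrite Hss eqxx.
Qed.

(* If s inverts p, it inverts every q commuting with p: q * s also inverts
   p, hence is an involution, and so is s. *)
Lemma inverter_centralizer p s q : ~ ell p -> s * p * s^-1 = p^-1 ->
  commute p q -> s * q * s^-1 = q^-1.
Proof.
move=> Hp H C.
have Ht : (q * s) * p * (q * s)^-1 = p^-1.
  rewrite -[_ * _ * _]/(cj (q * s) p) -cjJ [cj s p]H cj_commute //.
  exact/commuteV/commute_sym.
have [Hqs _] := inverter_involution Hp Ht.
have [Hs _] := inverter_involution Hp H.
have -> : s^-1 = s by apply: mulg1_eq.
by apply/esym/mulg1_eq; rewrite !mulgA in Hqs *.
Qed.

Lemma mul_odd_le a b c : ((c.*2.+1) * a <= c.*2 + (c.*2.+1) * b)%N -> a <= b.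
Proof.
move=> H; rewrite leqNgt; apply/negP => Hab.
have : ((c.*2.+1) * b.+1 <= (c.*2.+1) * a)%N by rewrite leq_mul2l Hab orbT.
by rewrite mulnS => H2; have := leq_trans H2 H; rewrite leq_add2r ltnn.
Qed.

(* A conjugate of a non-elliptic p that commutes with p is p or p^-1: after
   conjugating p to a cyclically reduced x, the conjugate z' is aligned with
   x, has the same length as x (compare the lengths of high powers), and
   commutes with x as a word, hence equals x. *)
Lemma conj_commuting p y : ~ ell p -> commute (y * p * y^-1) p ->
  y * p * y^-1 = p \/ y * p * y^-1 = p^-1.
Proof.
move=> Hp C; have [g [x [Hx Ep]]] := nell_cyc Hp.
set y0 := g^-1 * y * g; set z0 := cj y0 x.
have Ez : y * p * y^-1 = cj g z0.
  by rewrite /z0 /y0 -[_ * _ * _]/(cj y p) Ep !cjJ !mulgA mulgV mul1g.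
have C0 : commute x z0.
  by apply/commute_sym; apply: (@commute_cjV _ g); rewrite -Ez -Ep.
have Hz0 : z0 != 1.
  by apply/eqP => E; move: (cyc_ne1 Hx); rewrite -(cjK y0 x) -/z0 E cj1 eqxx.
have [z' [Ez' [Ga Cz']]] := commute_aligned_pm Hx C0 Hz0.
have [x' [Hx' [Ezx Hlx]]] : exists x', cyc x' /\ z' = cj y0 x' /\ len x' = len x.
  case: Ez' => ->; first by exists x.
  by exists x^-1; rewrite cjV len_inv; split => //; apply: cyc_inv.
have Hz'c := aligned_cyc Hx Ga.
have Hlen : len z' = len x.
  set c := len y0; set k := c.*2.+1.
  have L1 := len_pow k Hz'c; have L2 := len_pow k Hx'.
  apply/eqP; rewrite eqn_leq; apply/andP; split.
    apply: (@mul_odd_le _ _ c); rewrite -L1 -Hlx -L2 Ezx -cjX.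
    by apply: leq_trans (len_cj _ _) _; rewrite -addnn addnAC addnC.
  apply: (@mul_odd_le _ _ c); rewrite -L1 -Hlx -L2.
  have -> : x' ^+ k = cj y0^-1 (z' ^+ k) by rewrite Ezx -cjX cjK.
  by apply: leq_trans (len_cj _ _) _; rewrite len_inv -addnn addnAC addnC.
have Ezx' : z' = x.
  apply: nf_inj; have := congr1 (take (size (nf x))) (aligned_commute_words Hx Ga Cz').
  by rewrite take_size_cat // take_size_cat.
case: Ez' => Ez'; rewrite Ez Ep; first by left; rewrite -Ez' Ezx'.
by right; rewrite -cjV -Ezx' Ez' invgK.
Qed.

Lemma free_product_axioms : commutation_axioms ell.
Proof.
split.
- exact: ell1.
- by move=> u v Hu Hv C; apply: (centralizer_nonelliptic Hu C); apply/eqP.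
- exact: commute_trans_nonelliptic.
- by move=> x u; apply: conj_commuting.
- by move=> x u v; apply: inverter_centralizer.
- by move=> x u; apply: inverter_involution.
Qed.

End FreeProduct.

Lemma ev_and (Q1 Q2 : nat -> Prop) : eventually Q1 -> eventually Q2 ->
  eventually (fun n => Q1 n /\ Q2 n).
Proof.
case=> N1 H1 [N2 H2]; exists (maxn N1 N2) => n Hn; split.
  by apply: H1; apply: leq_trans Hn; apply: leq_maxl.
by apply: H2; apply: leq_trans Hn; apply: leq_maxr.
Qed.

Lemma ev_mono (Q1 Q2 : nat -> Prop) : (forall n, Q1 n -> Q2 n) ->
  eventually Q1 -> eventually Q2.
Proof. by move=> H [N HN]; exists N => n /HN /H. Qed.

Lemma ev_contra (Q : nat -> Prop) : eventually Q -> eventually (fun n => ~ Q n) -> False.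
Proof. by move=> H1 H2; case: (ev_and H1 H2) => N /(_ N (leqnn N)) []. Qed.

(* An equation between images in L
   holds iff it holds eventually in the free products, and a non-elliptic
   element of L lifts to elements that are eventually non-elliptic; so each
   commutation axiom, being an implication between such statements about
   finitely many elements, passes from the free products to L. *)
(* The index n of the families iA, iB, h must stay an explicit argument. *)
Unset Implicit Arguments.

Section LimitGroup.
Variables (G : groupType) (FA FB P : nat -> groupType)
  (iA : forall n, FA n -> P n) (iB : forall n, FB n -> P n).
Hypothesis Hfree : forall n, is_free_product (iA n) (iB n).
Variable h : forall n, G -> P n.
Hypothesis Hhom : forall n, group_hom (h n).
Hypothesis Hconv : convergent iA iB h.
Variables (L : groupType) (eta : G -> L).
Hypothesis Heta : group_hom eta.
Hypothesis Hsurj : forall x : L, exists g : G, eta g = x.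
Hypothesis Hker : forall g : G, eta g = 1 <-> stable_kernel h g.
Let ell n := elliptic (iA n) (iB n).
Set Implicit Arguments.

Notation E := (elliptics iA iB h eta).

Lemma hM n g1 g2 : h n (g1 * g2) = h n g1 * h n g2. Proof. exact: Hhom. Qed.
Lemma hV n g : h n g^-1 = (h n g)^-1. Proof. exact: homV (Hhom n) g. Qed.
Lemma etaV g : eta g^-1 = (eta g)^-1. Proof. exact: homV Heta g. Qed.

Lemma eta_eq g1 g2 : eta g1 = eta g2 <-> eventually (fun n => h n g1 = h n g2).
Proof.
have -> : eta g1 = eta g2 <-> eta (g1^-1 * g2) = 1.
  rewrite Heta etaV; split => [->|/mulg1_eq]; [exact: mulVg | by rewrite invgK].
rewrite Hker; split; apply: ev_mono => n; rewrite hM hV.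
  by move/mulg1_eq; rewrite invgK.
by move=> ->; rewrite mulVg.
Qed.

Lemma commute_eta g1 g2 : commute (eta g1) (eta g2) <->
  eventually (fun n => commute (h n g1) (h n g2)).
Proof. by rewrite /commute -!Heta eta_eq; split; apply: ev_mono => n; rewrite !hM. Qed.

Lemma conj_eta gx gb gc : eta gx * eta gb * (eta gx)^-1 = eta gc <->
  eventually (fun n => h n gx * h n gb * (h n gx)^-1 = h n gc).
Proof. by rewrite -etaV -!Heta eta_eq; split; apply: ev_mono => n; rewrite !hM hV. Qed.

Lemma square_eta g : eta g * eta g = 1 <-> eventually (fun n => h n g * h n g = 1).
Proof.
rewrite -Heta -(hom1 Heta) eta_eq.
by split; apply: ev_mono => n; rewrite hM (hom1 (Hhom n)).
Qed.

Lemma nontrivial_eta g : eta g <> 1 -> eventually (fun n => h n g <> 1).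
Proof. by move=> H; case: (proj1 (Hconv g)) => // Hk; case: H; apply/Hker. Qed.

Lemma nonelliptic_eta g : ~ E (eta g) -> eventually (fun n => ~ ell n (h n g)).
Proof. by move=> H; case: (proj2 (Hconv g)) => // He; case: H; exists g. Qed.

Lemma nonelliptic_eta_of g : eventually (fun n => ~ ell n (h n g)) -> ~ E (eta g).
Proof.
move=> Hn [g' [/eta_eq Eg He]]; apply: (ev_contra _ Hn).
by move: (ev_and He Eg); apply: ev_mono => n [H1 <-].
Qed.

Let Hax n := free_product_axioms (Hfree n).

Lemma limit_elliptic1 : E 1.
Proof.
exists 1; split; first exact: (hom1 Heta).
by exists 0 => n _; rewrite (hom1 (Hhom n)); apply: elliptic1 (Hax n).
Qed.

Lemma limit_centralizer_nonelliptic u v : ~ E u -> v <> 1 -> commute u v -> ~ E v.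
Proof.
case: (Hsurj u) => g1 <-; case: (Hsurj v) => g2 <- H1 H2 /commute_eta C.
apply: nonelliptic_eta_of.
move: (ev_and (ev_and (nonelliptic_eta H1) (nontrivial_eta H2)) C).
by apply: ev_mono => n [[Ha Hb] Hc]; apply: centralizer_nonelliptic_ax (Hax n) _ _ Ha Hb Hc.
Qed.

Lemma limit_commute_trans u v w : ~ E u -> commute u v -> commute u w -> commute v w.
Proof.
case: (Hsurj u) => g1 <-; case: (Hsurj v) => g2 <-; case: (Hsurj w) => g3 <-.
move=> H1 /commute_eta C2 /commute_eta C3; apply/commute_eta.
move: (ev_and (ev_and (nonelliptic_eta H1) C2) C3).
by apply: ev_mono => n [[Ha Hb] Hc]; apply: commute_trans_ax (Hax n) _ _ _ Ha Hb Hc.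
Qed.

(* Here convergence is used once more: the element x b x^-1 b^-1 is
   eventually trivial or eventually nontrivial, which decides which of the
   two alternatives holds eventually. *)
Lemma limit_conj_commuting x b : ~ E b -> commute (x * b * x^-1) b ->
  x * b * x^-1 = b \/ x * b * x^-1 = b^-1.
Proof.
case: (Hsurj x) => gx <-; case: (Hsurj b) => gb <- Hb C0.
have C : eventually (fun n => commute (h n (gx * gb * gx^-1)) (h n gb)).
  by apply/commute_eta; rewrite !Heta etaV.
have D : eventually (fun n => h n gx * h n gb * (h n gx)^-1 = h n gb \/
                             h n gx * h n gb * (h n gx)^-1 = (h n gb)^-1).
  move: (ev_and (nonelliptic_eta Hb) C); apply: ev_mono => n [Ha Hc].
  by apply: conj_commuting_ax (Hax n) _ _ Ha _; move: Hc; rewrite !hM hV.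
case: (proj1 (Hconv (gx * gb * gx^-1 * gb^-1))) => Hk; [left | right].
  by apply/conj_eta; move: Hk; apply: ev_mono => n; rewrite !hM !hV => /divg1_eq.
rewrite -[(eta gb)^-1]etaV; apply/conj_eta; move: (ev_and D Hk).
apply: ev_mono => n [[E1|E1] Hn]; last by rewrite hV.
by case: Hn; rewrite !hM !hV E1 mulgV.
Qed.

Lemma limit_inverter_centralizer x b c : ~ E b -> x * b * x^-1 = b^-1 ->
  commute b c -> x * c * x^-1 = c^-1.
Proof.
case: (Hsurj x) => gx <-; case: (Hsurj b) => gb <-; case: (Hsurj c) => gc <-.
move=> Hb; rewrite -[(eta gb)^-1]etaV -[(eta gc)^-1]etaV.
move=> /conj_eta Hi /commute_eta Hc; apply/conj_eta.
move: (ev_and (ev_and (nonelliptic_eta Hb) Hi) Hc); apply: ev_mono => n [[Ha H1] H2].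
by rewrite hV; apply: inverter_centralizer_ax (Hax n) _ _ _ Ha _ H2; rewrite H1 hV.
Qed.

Lemma limit_inverter_involution x b : ~ E b -> x * b * x^-1 = b^-1 ->
  x * x = 1 /\ E x.
Proof.
case: (Hsurj x) => gx <-; case: (Hsurj b) => gb <- Hb.
rewrite -[(eta gb)^-1]etaV => /conj_eta Hi.
have R : eventually (fun n => h n gx * h n gx = 1 /\ ell n (h n gx)).
  move: (ev_and (nonelliptic_eta Hb) Hi); apply: ev_mono => n [Ha H1].
  by apply: inverter_involution_ax (Hax n) _ _ Ha _; rewrite H1 hV.
split; first by apply/square_eta; move: R; apply: ev_mono => n [].
by exists gx; split => //; move: R; apply: ev_mono => n [].
Qed.

Lemma limit_group_axioms : commutation_axioms E.
Proof.
split.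
- exact: limit_elliptic1.
- exact: limit_centralizer_nonelliptic.
- exact: limit_commute_trans.
- exact: limit_conj_commuting.
- exact: limit_inverter_centralizer.
- exact: limit_inverter_involution.
Qed.

End LimitGroup.

Section CentralizerNormalizer.
Variables (L : groupType) (A : L -> Prop).

Lemma centralizer_subgroup : is_subgroup (centralizer A).
Proof.
split; first by move=> a _; rewrite mul1g mulg1.
split; first by move=> x y Cx Cy a Aa; rewrite -mulgA (Cy a Aa) mulgA (Cx a Aa) mulgA.
by move=> x Cx a Aa; apply: commuteVl; apply: Cx.
Qed.

Lemma normalizer_subgroup : is_subgroup (normalizer A).
Proof.
split; first by move=> a; rewrite mul1g invg1 mulg1.
split.
  move=> x y Nx Ny a.
  by rewrite -[x * y * a * _]/(cj (x * y) a) -cjJ /cj -Nx Ny.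
move=> x Nx a; rewrite invgK (Nx (x^-1 * a * x)).
by rewrite !mulgA mulgV mul1g mulgK.
Qed.

Lemma normalizerP x : (forall a, A a -> A (x * a * x^-1)) ->
  (forall a, A a -> A (x^-1 * a * x)) -> normalizer A x.
Proof.
move=> H1 H2 a; split; first exact: H1.
by move=> /H2; rewrite -!mulgA mulKg mulgA mulgVK.
Qed.

Lemma subset_centralizer : abelian_pred A -> subset_pred A (centralizer A).
Proof. by move=> Aab x Ax a Aa; apply: Aab. Qed.

Lemma centralizer_sub_normalizer : subset_pred (centralizer A) (normalizer A).
Proof.
move=> c Cc; apply: normalizerP => a Aa; first by rewrite Cc // mulgK.
have [_ [_ CV]] := centralizer_subgroup.
by rewrite (CV c Cc a Aa) mulgVK.
Qed.

End CentralizerNormalizer.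

Section CommutationTheory.
Variables (L : groupType) (E : L -> Prop).
Hypothesis HE : commutation_axioms E.

Lemma commuting_triple u1 u2 u3 : u1 <> 1 -> u2 <> 1 -> u3 <> 1 ->
  (~ E u1 \/ ~ E u2 \/ ~ E u3) -> [~ u1, u2] = 1 -> [~ u1, u3] = 1 ->
  ~ E u1 /\ ~ E u2 /\ ~ E u3 /\ [~ u2, u3] = 1.
Proof.
move=> H1 H2 H3 Hor /eqP/commgP c12 /eqP/commgP c13.
have key : ~ E u1 -> ~ E u1 /\ ~ E u2 /\ ~ E u3 /\ [~ u2, u3] = 1.
  move=> Hn; split; [done | split; [|split]].
  - exact: (centralizer_nonelliptic_ax HE Hn H2 c12).
  - exact: (centralizer_nonelliptic_ax HE Hn H3 c13).
  - by apply/eqP/commgP; apply: (commute_trans_ax HE Hn c12 c13).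
case: Hor => [|[]] Hn; apply: key => //.
  exact: (centralizer_nonelliptic_ax HE Hn H1 (commute_sym c12)).
exact: (centralizer_nonelliptic_ax HE Hn H1 (commute_sym c13)).
Qed.

(* Parts (ii) and (iii): an abelian subgroup A containing a non-elliptic
   element a0.  Everything is read off the centralizer C of a0, which
   equals C(A). *)
Section AbelianSubgroup.
Variable A : L -> Prop.
Hypotheses (Agrp : is_subgroup A) (Aab : abelian_pred A).
Variable a0 : L.
Hypotheses (Aa0 : A a0) (Ha0 : ~ E a0).

Notation C := (centralizer A).

Lemma centralizer_commute c : C c -> commute a0 c.
Proof. by move=> Cc; apply/esym/Cc. Qed.

Lemma centralizer_abelian : abelian_pred C.
Proof.
move=> x y Cx Cy.
exact: (commute_trans_ax HE Ha0 (centralizer_commute Cx) (centralizer_commute Cy)).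
Qed.

Lemma centralizer_max_abelian : max_abelian C.
Proof.
split; first exact: centralizer_subgroup A.
split; first exact: centralizer_abelian.
by move=> M _ Mab sub x Mx a Aa; apply: Mab Mx (sub a (subset_centralizer Aab Aa)).
Qed.

Lemma max_abelian_centralizer M : max_abelian M -> subset_pred A M ->
  forall x, M x <-> C x.
Proof.
move=> [_ [Mab Mmax]] AM x; split => [Mx a Aa|Cx]; first exact: Mab Mx (AM a Aa).
apply: (Mmax C (centralizer_subgroup A) centralizer_abelian) => // y My a Aa.
exact: Mab My (AM a Aa).
Qed.

Lemma centralizerA_nonelliptic x : C x -> x <> 1 -> ~ E x.
Proof. by move=> Cx Hx; apply: (centralizer_nonelliptic_ax HE Ha0 Hx (centralizer_commute Cx)). Qed.

Lemma centralizer_elliptic x : C x /\ E x <-> x = 1.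
Proof.
split => [[Cx Ex]|->]; last by split; [case: (centralizer_subgroup A) | apply: elliptic1 HE].
by apply: NNPP => Hx; apply: centralizerA_nonelliptic Cx Hx Ex.
Qed.

Definition inverts x := forall c, C c -> x * c * x^-1 = c^-1.

Lemma invertsV x : inverts x -> forall c, C c -> x^-1 * c * x = c^-1.
Proof.
move=> Ix c Cc; have [_ [_ CV]] := centralizer_subgroup A.
have H := Ix c^-1 (CV c Cc); rewrite invgK in H.
by rewrite -{1}H !mulgA mulVg mul1g mulgVK.
Qed.

Lemma inverts_normalizer x : inverts x -> normalizer A x.
Proof.
have [_ [_ AV]] := Agrp.
move=> Ix; apply: normalizerP => a Aa; last rewrite (invertsV Ix (subset_centralizer Aab Aa)).
  by rewrite (Ix a (subset_centralizer Aab Aa)); apply: AV.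
exact: AV.
Qed.

Lemma inverts_coset x y : inverts x -> inverts y -> C (x^-1 * y).
Proof.
move=> Ix Iy a Aa; have Ca := subset_centralizer Aab Aa.
have Ey : y * a = a^-1 * y by rewrite -(Iy a Ca) mulgVK.
have Ex : x^-1 * a^-1 = a * x^-1.
  have [_ [_ CV]] := centralizer_subgroup A.
  by have := invertsV Ix (CV a Ca); rewrite invgK => {2}<-; rewrite mulgK.
by rewrite -mulgA Ey mulgA Ex mulgA.
Qed.

(* An element of N(A) centralizes A or inverts C: it maps a0 to an element
   of A, which commutes with a0, hence equals a0 or a0^-1. *)
Lemma normalizer_dichotomy x : normalizer A x -> C x \/ inverts x.
Proof.
move=> Nx; have cm : commute (x * a0 * x^-1) a0 by apply: Aab (proj1 (Nx a0) Aa0) Aa0.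
case: (conj_commuting_ax HE Ha0 cm) => [Hfix|Hinv]; [left | right].
  have Cxa : commute x a0 by rewrite /commute -{2}Hfix mulgVK.
  move=> a Aa.
  exact: (commute_trans_ax HE Ha0 (commute_sym Cxa) (centralizer_commute (subset_centralizer Aab Aa))).
by move=> c Cc; apply: (inverter_centralizer_ax HE Ha0 Hinv (centralizer_commute Cc)).
Qed.

Lemma centralizer_index_le2 : index_le2 C (normalizer A).
Proof.
have [_ [CM CV]] := centralizer_subgroup A.
move=> x y z /normalizer_dichotomy [Cx|Ix] /normalizer_dichotomy [Cy|Iy]
  /normalizer_dichotomy [Cz|Iz].
- by left; apply: CM (CV _ Cx) Cy.
- by left; apply: CM (CV _ Cx) Cy.
- by right; left; apply: CM (CV _ Cx) Cz.
- by right; right; apply: inverts_coset.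
- by right; right; apply: CM (CV _ Cy) Cz.
- by right; left; apply: inverts_coset.
- by left; apply: inverts_coset.
- by left; apply: inverts_coset.
Qed.

Lemma centralizer_almost_malnormal l : ~ normalizer A l ->
  forall y, ((exists c, C c /\ y = l * c * l^-1) /\ A y) <-> y = 1.
Proof.
have [C1 _] := centralizer_subgroup A.
move=> Nl y; split; last first.
  by move=> ->; split; [exists 1; rewrite mulg1 mulgV | case: Agrp].
move=> [[c [Cc ->]] Ay]; apply: NNPP => Hy.
have Hc : c <> 1 by move=> Ec; apply: Hy; rewrite Ec mulg1 mulgV.
have nEc := centralizerA_nonelliptic Cc Hc.
have cm : commute (l * c * l^-1) c by apply: centralizer_abelian (subset_centralizer Aab Ay) Cc.
case: (conj_commuting_ax HE nEc cm) => [Hfix|Hinv]; apply: Nl.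
  have Clc : commute l c by rewrite /commute -{2}Hfix mulgVK.
  apply: centralizer_sub_normalizer => a Aa.
  exact: (commute_trans_ax HE nEc (commute_sym Clc) (Cc a Aa)).
apply: inverts_normalizer => c' Cc'.
exact: (inverter_centralizer_ax HE nEc Hinv (centralizer_abelian Cc Cc')).
Qed.

Lemma normalizer_dihedral x : normalizer A x -> ~ C x ->
  x <> 1 /\ x * x = 1 /\ E x /\ inverts x /\
  (forall y, normalizer A y <-> generated (fun z => C z \/ z = x) y).
Proof.
move=> Nx nCx; have [C1 _] := centralizer_subgroup A.
have Ix : inverts x by case: (normalizer_dichotomy Nx).
have [Hxx Ex] := inverter_involution_ax HE Ha0 (Ix a0 (subset_centralizer Aab Aa0)).
split; first by move=> Ex1; apply: nCx; rewrite Ex1.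
do 3 (split => //); move=> y; split.
  move=> /normalizer_dichotomy [Cy|Iy]; first by apply: gen_base; left.
  rewrite -(mulVKg x y); apply: gen_mul; first by apply: gen_base; right.
  by apply: gen_base; left; apply: inverts_coset.
have [N1 [NM NV]] := normalizer_subgroup A.
elim => [z [Cz|->]| |z w _ Hz _ Hw|z _ Hz] //.
- exact: centralizer_sub_normalizer.
- exact: NM.
- exact: NV.
Qed.

End AbelianSubgroup.

End CommutationTheory.

(* L is the limit group G / K of a convergent sequence h_n : G -> FA n * FB n
   (G finitely generated, P n the free product of FA n and FB n), presented
   as a group L with a surjective homomorphism eta : G -> L whose kernel is
   the stable kernel K; E = E_L is its set of elliptics. *)
Theorem lemma4
  (G : groupType) (Hfg : finitely_generated G)
  (FA FB P : nat -> groupType)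
  (iA : forall n, FA n -> P n) (iB : forall n, FB n -> P n)
  (Hfree : forall n, is_free_product (iA n) (iB n))
  (h : forall n, G -> P n) (Hhom : forall n, group_hom (h n))
  (Hconv : convergent iA iB h)
  (L : groupType) (eta : G -> L) (Heta : group_hom eta)
  (Hsurj : forall x : L, exists g : G, eta g = x)
  (Hker : forall g : G, eta g = 1 <-> stable_kernel h g) :
  let E := elliptics iA iB h eta in
  (* (i) *)
  (forall u1 u2 u3 : L,
     u1 <> 1 -> u2 <> 1 -> u3 <> 1 ->
     (~ E u1 \/ ~ E u2 \/ ~ E u3) ->
     [~ u1, u2] = 1 -> [~ u1, u3] = 1 ->
     ~ E u1 /\ ~ E u2 /\ ~ E u3 /\ [~ u2, u3] = 1) /\
  (forall A : L -> Prop,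
     is_subgroup A -> abelian_pred A ->
     (exists a, A a /\ a <> 1) -> (exists a, A a /\ ~ E a) ->
     (* (ii) *)
     (subset_pred A (centralizer A) /\
      max_abelian (centralizer A) /\
      (forall M : L -> Prop, max_abelian M -> subset_pred A M ->
         forall x, M x <-> centralizer A x) /\
      (forall x, (centralizer A x /\ E x) <-> x = 1)) /\
     (* (iii) *)
     (subset_pred (centralizer A) (normalizer A) /\
      index_le2 (centralizer A) (normalizer A) /\
      (forall l : L, ~ normalizer A l ->
         forall y, ((exists c, centralizer A c /\ y = l * c * l^-1) /\ A y)
                   <-> y = 1) /\
      ((exists x, normalizer A x /\ ~ centralizer A x) ->
         exists e : L,
           normalizer A e /\ e <> 1 /\ e * e = 1 /\ E e /\
           (forall c, centralizer A c -> e * c * e^-1 = c^-1) /\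
           (forall x, normalizer A x <->
                      generated (fun y => centralizer A y \/ y = e) x)))).
Proof.
move=> E; have HE : commutation_axioms E by apply: limit_group_axioms.
split; first exact: (commuting_triple HE).
move=> A Agrp Aab _ [a0 [Aa0 Ha0]].
split; first split.
- exact: (subset_centralizer Aab).
- split; first exact: (centralizer_max_abelian HE Aab Aa0 Ha0).
  split; first exact: (max_abelian_centralizer HE Aa0 Ha0).
  exact: (centralizer_elliptic HE Aa0 Ha0).
- split; first exact: centralizer_sub_normalizer.
  split; first exact: (centralizer_index_le2 HE Aab Aa0 Ha0).
  split; first exact: (centralizer_almost_malnormal HE Agrp Aab Aa0 Ha0).
  move=> [x [Nx nCx]].
  have [x1 [xx [Ex [Ix Ngen]]]] := normalizer_dihedral HE Aab Aa0 Ha0 Nx nCx.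
  by exists x.
Qed.
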